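(* Let $d,n\in\mathbb{N}_{\ge1}$. For any ReLU FNN $f_{FF}:\mathbb{R}^{dn}\to\mathbb{R}$ with depth $L$, width $W$ and weight bound $B$, there exists a Transformer $\boldsymbol T^{(FF)}:\mathbb{R}^{(d+n)\times n}\to\mathbb{R}^{1\times n}$ of length $1$ with size $\{(L_0,W_0),(H_1,S_1),(L_1,W_1)\}=\{(2,2dn),(1,dn),(L,\max\{W,2dn\})\}$ and dimension vector $(d+n,d+n,2dn,1)$ such that for any $\boldsymbol X\in[0,1]^{d\times n}$, $$\boldsymbol T^{(FF)}\left(\begin{pmatrix}\boldsymbol X\\ \boldsymbol I_{n\times n}-\boldsymbol 1_{n\times n}\end{pmatrix}\right)=f_{FF}(\boldsymbol X^{(flt)})\boldsymbol 1_{1\times n},$$ where $\boldsymbol X^{(flt)}=(x_{11},\dots,x_{1n},x_{21},\dots,x_{2n},\dots,x_{d1},\dots,x_{dn})^\top\in\mathbb{R}^{dn}$. Furthermore, $B_{FF}=\max\{B,1\}$ and $B_{SA}=n$.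
   Context: $\boldsymbol 1_{n\times n}$ is the all-ones matrix. ReLU FNN of depth $L$, width $W$: $f_0=x$, $f_l=\sigma_R(W_lf_{l-1}+b_l)$ ($1\le l\le L-1$), $f=W_Lf_{L-1}+b_L$ with hidden width $W$, $\sigma_R(x)=\max\{x,0\}$; weight bound = max absolute parameter value. Transformers: a feedforward block applies such a net column-wise; a self-attention layer on $\mathbb{R}^{D\times n}$ with $H$ heads of size $S$ is $X\mapsto X+\sum_{h=1}^HW_O^{(h)}W_V^{(h)}X\sigma_S(X^\top W_K^{(h)\top}W_Q^{(h)}X)$ with $W_O^{(h)}\in\mathbb{R}^{D\times S}$, $W_V^{(h)},W_K^{(h)},W_Q^{(h)}\in\mathbb{R}^{S\times D}$ and $\sigma_S$ the column-wise softmax; embedding layer $X\mapsto W_{EB}X+B_{EB}$. A Transformer of length $K$ is $\mathcal F_{FF}^{(K)}\circ\mathcal F_{SA}^{(K)}\circ\cdots\circ\mathcal F_{SA}^{(1)}\circ\mathcal F_{FF}^{(0)}\circ\mathcal F_{EB}$; size lists depths/widths $(L_k,W_k)$ of $\mathcal F_{FF}^{(k)}$ and head numbers/sizes $(H_k,S_k)$ of $\mathcal F_{SA}^{(k)}$; dimension vector $(d_{in},d_0,\dots,d_K,d_{out})$ means $\mathcal F_{EB}:\mathbb{R}^{d_{in}\times n}\to\mathbb{R}^{d_0\times n}$, $\mathcal F_{FF}^{(k)}:\mathbb{R}^{d_k\times n}\to\mathbb{R}^{d_{k+1}\times n}$ ($d_{K+1}=d_{out}$), $\mathcal F_{SA}^{(k)}$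 on $\mathbb{R}^{d_k\times n}$. $B_{FF},B_{SA}$ bound absolute values of parameters of feedforward blocks and attention layers. *)

From mathcomp Require Import all_boot all_order all_algebra.
From mathcomp Require Import all_classical all_reals all_analysis.
Unset Printing Implicit Defensive.
Import Order.TTheory GRing.Theory Num.Theory.
Local Open Scope ring_scope.

Definition relu (R : realType) (x : R) : R := Num.max x 0.
Arguments relu {R}.

(* Parameters of a ReLU FNN: weight (l, i, j) = (W_l)_{ij}, bias (l, i) = (b_l)_i,
   layers l = 1..L.  Only the entries within the layer dimensions are used. *)
Record fnn (R : realType) := FNN {
  fnn_w : nat -> nat -> nat -> R;
  fnn_b : nat -> nat -> R }.
Arguments FNN {R}. Arguments fnn_w {R}. Arguments fnn_b {R}.

Definition fnn_dim (din W dout L l : nat) : nat :=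
  if l == 0%N then din else if l == L then dout else W.

Fixpoint fnn_hidden (R : realType) (N : fnn R) (din W dout L : nat)
    (x : nat -> R) (l : nat) : nat -> R :=
  match l with
  | 0%N => x
  | l'.+1 => fun i => relu (\sum_(j < fnn_dim din W dout L l')
                 fnn_w N l'.+1 i j * fnn_hidden R N din W dout L x l' j
               + fnn_b N l'.+1 i)
  end.
Arguments fnn_hidden {R}.

Definition fnn_eval (R : realType) (N : fnn R) (din W dout L : nat)
    (x : nat -> R) : nat -> R :=
  fun i => \sum_(j < fnn_dim din W dout L L.-1)
             fnn_w N L i j * fnn_hidden N din W dout L x L.-1 j + fnn_b N L i.
Arguments fnn_eval {R}.

Definition fnn_bounded (R : realType) (N : fnn R) (din W dout L : nat) (B : R) :=
  forall l, (1 <= l <= L)%N -> forall i, (i < fnn_dim din W dout L l)%N ->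
    `|fnn_b N l i| <= B /\
    (forall j, (j < fnn_dim din W dout L l.-1)%N -> `|fnn_w N l i j| <= B).
Arguments fnn_bounded {R}.

Definition ofvec (R : realType) (D : nat) (v : 'I_D -> R) : nat -> R :=
  fun k => if (insub k : option 'I_D) is Some k' then v k' else 0.
Arguments ofvec {R D}.

Definition flatten_mx (R : realType) (d n : nat) (X : 'M[R]_(d, n)) : nat -> R :=
  fun k => ofvec (fun i : 'I_d => ofvec (fun j : 'I_n => X i j) (k %% n)) (k %/ n).
Arguments flatten_mx {R d n}.

Definition ff_block (R : realType) (N : fnn R) (din W dout L n : nat)
    (X : 'M[R]_(din, n)) : 'M[R]_(dout, n) :=
  \matrix_(i < dout, j < n) fnn_eval N din W dout L (ofvec (fun k => X k j)) i.
Arguments ff_block {R} N din W dout L {n}.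

Definition softmax_col (R : realType) (n : nat) (A : 'M[R]_(n, n)) : 'M[R]_(n, n) :=
  \matrix_(i < n, j < n) (expR (A i j) / \sum_(k < n) expR (A k j)).
Arguments softmax_col {R n}.

Definition self_attn (R : realType) (D n H S : nat)
    (WO : 'I_H -> 'M[R]_(D, S)) (WV WK WQ : 'I_H -> 'M[R]_(S, D))
    (X : 'M[R]_(D, n)) : 'M[R]_(D, n) :=
  X + \sum_(h < H) (WO h *m WV h *m X *m
                    softmax_col (X^T *m (WK h)^T *m WQ h *m X)).
Arguments self_attn {R D n H S}.

(* Transformer of length 1 with dimension vector (din, d0, d1, dout),
   H1 heads of size S1. *)
Record tf1 (R : realType) (din d0 d1 dout n H S : nat) := TF1 {
  tf_WEB : 'M[R]_(d0, din);
  tf_BEB : 'M[R]_(d0, n);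
  tf_FF0 : fnn R;
  tf_WO : 'I_H -> 'M[R]_(d1, S);
  tf_WV : 'I_H -> 'M[R]_(S, d1);
  tf_WK : 'I_H -> 'M[R]_(S, d1);
  tf_WQ : 'I_H -> 'M[R]_(S, d1);
  tf_FF1 : fnn R }.
Arguments tf_WEB {R din d0 d1 dout n H S}. Arguments tf_BEB {R din d0 d1 dout n H S}.
Arguments tf_FF0 {R din d0 d1 dout n H S}. Arguments tf_FF1 {R din d0 d1 dout n H S}.
Arguments tf_WO {R din d0 d1 dout n H S}. Arguments tf_WV {R din d0 d1 dout n H S}.
Arguments tf_WK {R din d0 d1 dout n H S}. Arguments tf_WQ {R din d0 d1 dout n H S}.

Definition tf1_eval (R : realType) (din d0 d1 dout n H S : nat)
    (T : tf1 R din d0 d1 dout n H S) (L0 W0 L1 W1 : nat)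
    (X : 'M[R]_(din, n)) : 'M[R]_(dout, n) :=
  ff_block (tf_FF1 T) d1 W1 dout L1
    (self_attn (tf_WO T) (tf_WV T) (tf_WK T) (tf_WQ T)
       (ff_block (tf_FF0 T) d0 W0 d1 L0 (tf_WEB T *m X + tf_BEB T))).
Arguments tf1_eval {R din d0 d1 dout n H S}.

Definition tf1_bounded_FF (R : realType) (din d0 d1 dout n H S : nat)
    (T : tf1 R din d0 d1 dout n H S) (L0 W0 L1 W1 : nat) (BFF : R) :=
  fnn_bounded (tf_FF0 T) d0 W0 d1 L0 BFF /\ fnn_bounded (tf_FF1 T) d1 W1 dout L1 BFF.
Arguments tf1_bounded_FF {R din d0 d1 dout n H S}.

Definition tf1_bounded_SA (R : realType) (din d0 d1 dout n H S : nat)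
    (T : tf1 R din d0 d1 dout n H S) (BSA : R) :=
  forall h : 'I_H,
    (forall i j, `|tf_WO T h i j| <= BSA) /\
    (forall i j, `|tf_WV T h i j| <= BSA) /\
    (forall i j, `|tf_WK T h i j| <= BSA) /\
    (forall i j, `|tf_WQ T h i j| <= BSA).

Arguments tf1_bounded_SA {R din d0 d1 dout n H S}.

From mathcomp Require Import all_boot all_order all_algebra.
From mathcomp Require Import all_classical all_reals all_analysis.
From mathcomp Require Import zify.
Import Order.TTheory GRing.Theory Num.Theory.
Local Open Scope ring_scope.

(* The embedding is the identity and the rows of I - 1 serve as one-hot codes
   of the column index.  The first feedforward block gives hidden unit dn + k
   (k < dn) the value relu(x_{k/n,c} + [c = k mod n] - 1), i.e. x_{k/n,c} in
   column c = k mod n and 0 in every other column, since x <= 1.  With zero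
   query and key matrices the softmax is the uniform 1/n, so a single head
   whose output matrix is scaled by n adds the row sum of row dn + k, namely
   the k-th entry of X^(flt), to row k of every column.  The last block is
   f_FF padded with zero weights to the larger input dimension and width. *)

Section TransformerFromFNN.
Variable R : realType.

Lemma sum_delta m (F : nat -> R) i : (i < m)%N ->
  \sum_(j < m) (j == i :> nat)%:R * F j = F i.
Proof.
move=> lt_im; under eq_bigr => j _ do rewrite mulr_natl mulrb.
by rewrite -big_mkcond big_ord1_eq lt_im.
Qed.

Lemma ofvec_nat D (v : 'I_D -> R) k (lt_kD : (k < D)%N) :
  ofvec v k = v (Ordinal lt_kD).
Proof. by rewrite /ofvec -[k]/(val (Ordinal lt_kD)) valK. Qed.
Arguments ofvec_nat {D} v {k}.

Lemma ofvec_col_mx_up m1 m2 q (A : 'M[R]_(m1, q)) (B : 'M[R]_(m2, q)) c k :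
  (k < m1)%N -> ofvec (fun i => col_mx A B i c) k = ofvec (fun i => A i c) k.
Proof.
move=> lt_k; rewrite (ofvec_nat _ lt_k) (ofvec_nat _ (ltn_addr m2 lt_k)).
have -> : Ordinal (ltn_addr m2 lt_k) = lshift m2 (Ordinal lt_k) by exact: val_inj.
by rewrite col_mxEu.
Qed.

Lemma ofvec_col_mx_down m1 m2 q (A : 'M[R]_(m1, q)) (B : 'M[R]_(m2, q)) c k :
  (k < m2)%N ->
  ofvec (fun i => col_mx A B i c) (m1 + k) = ofvec (fun i => B i c) k.
Proof.
move=> lt_k; have lt_mk : (m1 + k < m1 + m2)%N by rewrite ltn_add2l.
rewrite (ofvec_nat _ lt_k) (ofvec_nat _ lt_mk).
have -> : Ordinal lt_mk = rshift m1 (Ordinal lt_k) by exact: val_inj.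
by rewrite col_mxEd.
Qed.

Lemma ofvec_unit_interval D (v : 'I_D -> R) k :
  (forall i, 0 <= v i <= 1) -> 0 <= ofvec v k <= 1.
Proof. by rewrite /ofvec; case: insub => [i|_] //; rewrite lexx ler01. Qed.

Lemma flatten_mx_col {d n} (X : 'M[R]_(d, n)) (c : 'I_n) j :
  (j %% n)%N = c -> flatten_mx X j = ofvec (fun i => X i c) (j %/ n)%N.
Proof.
move=> jc; rewrite /flatten_mx /ofvec; case: insub => // i.
by rewrite jc valK.
Qed.

Lemma relu_add_indicator (x : R) (b : bool) : 0 <= x <= 1 ->
  relu (x + (b%:R - 1)) = if b then x else 0.
Proof.
case/andP=> x0 x1; rewrite /relu; case: b => /=.
  by rewrite subrr addr0 max_l.
by rewrite sub0r max_r // subr_le0.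
Qed.

Lemma norm_indicator (b : bool) : `|b%:R : R| <= 1.
Proof. by case: b; rewrite ?normr1 ?normr0 ?ler01. Qed.

Definition fnn_pad (N : fnn R) (din W dout L : nat) : fnn R :=
  FNN (fun l i j => if (i < fnn_dim din W dout L l)%N
                       && (j < fnn_dim din W dout L l.-1)%N
                    then fnn_w N l i j else 0)
      (fun l i => if (i < fnn_dim din W dout L l)%N then fnn_b N l i else 0).

Lemma fnn_bounded_le (N : fnn R) din W dout L (B B' : R) : B <= B' ->
  fnn_bounded N din W dout L B -> fnn_bounded N din W dout L B'.
Proof.
move=> le_BB' bN l hl i hi; have [bb bw] := bN l hl i hi.
by split=> [|j hj]; [exact: le_trans bb le_BB' | exact: le_trans (bw j hj) le_BB'].
Qed.

Lemma fnn_pad_bounded (N : fnn R) din W dout L din' W' (B : R) : 0 <= B ->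
  fnn_bounded N din W dout L B ->
  fnn_bounded (fnn_pad N din W dout L) din' W' dout L B.
Proof.
move=> B0 bN l hl i _ /=; split=> [|j _].
  by case: ifP => [hi|_]; [exact: (bN l hl i hi).1 | rewrite normr0].
by case: ifP => [/andP[hi hj]|_]; [exact: (bN l hl i hi).2 j hj | rewrite normr0].
Qed.

Lemma fnn_dim_mono {din W din' W'} dout L l : (din <= din')%N -> (W <= W')%N ->
  (fnn_dim din W dout L l <= fnn_dim din' W' dout L l)%N.
Proof. by rewrite /fnn_dim; case: ifP => // _; case: ifP. Qed.

Section PaddedNetwork.
Variables (N : fnn R) (din W dout L din' W' : nat).
Hypotheses (le_din : (din <= din')%N) (le_W : (W <= W')%N).

Lemma fnn_pad_layer l i (u v : nat -> R) : (i < fnn_dim din W dout L l)%N ->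
  (forall j, (j < fnn_dim din W dout L l.-1)%N -> u j = v j) ->
  \sum_(j < fnn_dim din' W' dout L l.-1) fnn_w (fnn_pad N din W dout L) l i j * u j
  = \sum_(j < fnn_dim din W dout L l.-1) fnn_w N l i j * v j.
Proof.
move=> hi uv.
rewrite [RHS](big_ord_widen _ (fun j => fnn_w N l i j * v j)
                (fnn_dim_mono dout L l.-1 le_din le_W)) [RHS]big_mkcond /=.
by apply: eq_bigr => j _; rewrite hi /=; case: ifP => [/uv ->|_]; rewrite ?mul0r.
Qed.

Lemma fnn_hidden_pad {x y : nat -> R} :
  (forall j, (j < din)%N -> x j = y j) ->
  forall l j, (j < fnn_dim din W dout L l)%N ->
  fnn_hidden (fnn_pad N din W dout L) din' W' dout L x l j
  = fnn_hidden N din W dout L y l j.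
Proof.
move=> xy; elim=> [|l IH] j hj /=; first by apply: xy; rewrite /fnn_dim eqxx in hj.
by rewrite (fnn_pad_layer l.+1 j _ _ hj IH) hj.
Qed.

Lemma fnn_eval_pad (x y : nat -> R) i : (0 < L)%N -> (i < dout)%N ->
  (forall j, (j < din)%N -> x j = y j) ->
  fnn_eval (fnn_pad N din W dout L) din' W' dout L x i
  = fnn_eval N din W dout L y i.
Proof.
move=> L0 hi xy; have hiL : (i < fnn_dim din W dout L L)%N.
  by rewrite /fnn_dim eqxx (negbTE (lt0n_neq0 L0)).
by rewrite /fnn_eval (fnn_pad_layer L i _ _ hiL (fnn_hidden_pad xy _)) /= hiL.
Qed.

End PaddedNetwork.

Section GatherNetwork.
Variables (d n : nat).
Hypothesis n0 : (0 < n)%N.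

Definition gather_fnn : fnn R :=
  FNN (fun l k j =>
         if l == 1%N then
           if (d * n <= k)%N then
             (j == (k - d * n) %/ n)%N%:R + (j == d + (k - d * n) %% n)%N%:R
           else 0
         else (j == k)%:R)
      (fun _ _ => 0).

Lemma gather_fnn_bounded :
  fnn_bounded gather_fnn (d + n) (2 * d * n) (2 * d * n) 2 1.
Proof.
move=> l _ k hk; split=> [|j _] /=; first by rewrite normr0 ler01.
case: eqP => [l_1|_]; last exact: norm_indicator.
case: leqP => _; last by rewrite normr0 ler01.
have lt_a : ((k - d * n) %/ n < d)%N.
  by rewrite ltn_divLR //; move: hk; rewrite l_1 /fnn_dim /=; lia.
have [->|_] := eqVneq j ((k - d * n) %/ n)%N.
  by rewrite ltn_eqF ?addr0 ?norm_indicator // ltn_addr.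
by rewrite add0r norm_indicator.
Qed.

Lemma gather_block_relu (Z : 'M[R]_(d + n, n)) (r : 'I_(2 * d * n)) c :
  ff_block gather_fnn (d + n) (2 * d * n) (2 * d * n) 2 Z r c
  = relu (\sum_(k < d + n) fnn_w gather_fnn 1 r k * ofvec (fun i => Z i c) k).
Proof.
rewrite /ff_block mxE /fnn_eval /fnn_dim /= !addr0.
by rewrite (sum_delta _ (fun j => relu (\sum_(k < d + n)
  fnn_w gather_fnn 1 j k * ofvec (fun i => Z i c) k + 0)) _ (ltn_ord r)) addr0.
Qed.

Lemma gather_top (Z : 'M[R]_(d + n, n)) (r : 'I_(2 * d * n)) c : (r < d * n)%N ->
  ff_block gather_fnn (d + n) (2 * d * n) (2 * d * n) 2 Z r c = 0.
Proof.
move=> lt_r; rewrite gather_block_relu /= leqNgt lt_r big1 ?/relu ?maxxx //.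
by move=> k _; rewrite mul0r.
Qed.

Lemma gather_bottom (X : 'M[R]_(d, n)) (r : 'I_(2 * d * n)) (c : 'I_n) j :
  (forall i j, 0 <= X i j <= 1) -> (r : nat) = (d * n + j)%N ->
  ff_block gather_fnn (d + n) (2 * d * n) (2 * d * n) 2
    (col_mx X (1%:M - const_mx 1)) r c
  = if (c : nat) == (j %% n)%N then flatten_mx X j else 0.
Proof.
move=> X01 r_eq; have lt_j : (j < d * n)%N by have := ltn_ord r; rewrite r_eq; lia.
have lt_a : (j %/ n < d)%N by rewrite ltn_divLR.
have lt_b : (j %% n < n)%N by rewrite ltn_pmod.
have lt_db : (d + j %% n < d + n)%N by rewrite ltn_add2l.
rewrite gather_block_relu /= r_eq leq_addr addKn.
under eq_bigr => k _ do rewrite mulrDl.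
rewrite big_split /= !sum_delta ?(ltn_addr n lt_a) //.
rewrite ofvec_col_mx_up // ofvec_col_mx_down // (ofvec_nat _ lt_b) !mxE.
rewrite relu_add_indicator ?ofvec_unit_interval //.
have -> : (Ordinal lt_b == c) = ((c : nat) == (j %% n)%N) by rewrite eq_sym.
by case: eqP => [jc|//]; rewrite (flatten_mx_col X c j (esym jc)).
Qed.

End GatherNetwork.

Lemma softmax_col0 n : softmax_col (0 : 'M[R]_n) = const_mx n%:R^-1.
Proof.
apply/matrixP => i j; rewrite !mxE.
under eq_bigr => k _ do rewrite mxE expR0.
by rewrite expR0 sumr_const card_ord div1r.
Qed.

Lemma self_attn_uniform D n H S (WO : 'I_H -> 'M[R]_(D, S)) WV
    (X : 'M[R]_(D, n)) :
  self_attn WO WV (fun _ => 0) (fun _ => 0) X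
  = X + \sum_(h < H) WO h *m WV h *m X *m const_mx n%:R^-1.
Proof.
rewrite /self_attn; congr (_ + _); apply: eq_bigr => h _.
by rewrite trmx0 mulmx0 !mul0mx softmax_col0.
Qed.

Definition row_shift_mx m p off : 'M[R]_(m, p) :=
  \matrix_(k, i) ((i : nat) == (k + off)%N)%:R.

Lemma row_shift_mulmx {m p q off} (Y : 'M[R]_(p, q)) (k : 'I_m) (i : 'I_p) c :
  (i : nat) = (k + off)%N -> (row_shift_mx m p off *m Y) k c = Y i c.
Proof.
move=> i_eq; rewrite mxE (bigD1 i) //= mxE i_eq eqxx mul1r big1 ?addr0 //.
by move=> i' ne; rewrite mxE -i_eq (inj_eq val_inj) (negbTE ne) mul0r.
Qed.

Lemma row_shift_mx_norm m p off k i : `|row_shift_mx m p off k i| <= 1.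
Proof. by rewrite mxE norm_indicator. Qed.

Section CopyAttention.
Variables (n m p off : nat).
Hypothesis n0 : (0 < n)%N.

Definition copy_WO : 'M[R]_(p, m) := n%:R *: row_shift_mx p m 0.
Definition copy_WV : 'M[R]_(m, p) := row_shift_mx m p off.

Lemma copy_attn_entry (Y : 'M[R]_(p, n)) (r s : 'I_p) c :
  (r < m)%N -> (s : nat) = (r + off)%N ->
  self_attn (fun _ : 'I_1 => copy_WO) (fun _ => copy_WV) (fun _ => 0) (fun _ => 0)
    Y r c
  = Y r c + \sum_(c' < n) Y s c'.
Proof.
move=> lt_rm s_eq; rewrite self_attn_uniform big_ord1 !mxE; congr (_ + _).
rewrite -mulmxA /copy_WO -scalemxAl.
under eq_bigr => c' _ do rewrite [const_mx _ _ _]mxE mxE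
  (row_shift_mulmx _ r (Ordinal lt_rm)) ?addn0 // (row_shift_mulmx _ _ s) //.
by rewrite -mulr_suml -mulr_sumr mulrAC mulfV ?mul1r // pnatr_eq0 -lt0n.
Qed.

Lemma copy_WO_norm i k : `|copy_WO i k| <= n%:R.
Proof. by rewrite mxE normrM normr_nat ler_piMr ?row_shift_mx_norm. Qed.

Lemma copy_WV_norm k i : `|copy_WV k i| <= n%:R.
Proof. by apply: le_trans (row_shift_mx_norm _ _ _ _ _) _; rewrite ler1n. Qed.

End CopyAttention.

Lemma attn_gather_flatten d n (X : 'M[R]_(d, n)) (c : 'I_n) j :
  (0 < n)%N -> (forall i j, 0 <= X i j <= 1) -> (j < d * n)%N ->
  ofvec (fun k => self_attn (fun _ : 'I_1 => copy_WO n (d * n) (2 * d * n))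
                    (fun _ => copy_WV (d * n) (2 * d * n) (d * n))
                    (fun _ => 0) (fun _ => 0)
                    (ff_block (gather_fnn d n) (d + n) (2 * d * n) (2 * d * n) 2
                       (col_mx X (1%:M - const_mx 1))) k c) j
  = flatten_mx X j.
Proof.
move=> n0 X01 lt_j.
have lt_j2 : (j < 2 * d * n)%N by lia.
have lt_s : (j + d * n < 2 * d * n)%N by lia.
rewrite (ofvec_nat _ lt_j2) (copy_attn_entry _ _ _ _ n0 _ _ (Ordinal lt_s)) //.
rewrite gather_top // add0r.
under eq_bigr => c' _ do
  rewrite (gather_bottom _ _ n0 X (Ordinal lt_s) c' j X01 (addnC _ _)).
by rewrite -big_mkcond (big_ord1_eq _ (fun _ => flatten_mx X j)) ltn_pmod.
Qed.

End TransformerFromFNN.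

Theorem lemma8 (R : realType) (d n L W : nat) (B : R) (N : fnn R) :
  (0 < d)%N -> (0 < n)%N -> (0 < L)%N ->
  fnn_bounded N (d * n) W 1 L B ->
  exists T : tf1 R (d + n) (d + n) (2 * d * n) 1 n 1 (d * n),
    tf1_bounded_FF T 2 (2 * d * n) L (maxn W (2 * d * n)) (Num.max B 1) /\
    tf1_bounded_SA T n%:R /\
    forall X : 'M[R]_(d, n), (forall i j, 0 <= X i j <= 1) ->
      tf1_eval T 2 (2 * d * n) L (maxn W (2 * d * n))
        (col_mx X (1%:M - const_mx 1))
      = const_mx (fnn_eval N (d * n) W 1 L (flatten_mx X) 0%N).
Proof.
move=> d0 n0 L0 bN.
have le_1B : 1 <= Num.max B 1 by rewrite le_max lexx orbT.
have le_BB : B <= Num.max B 1 by rewrite le_max lexx.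
exists (@TF1 R (d + n) (d + n) (2 * d * n) 1 n 1 (d * n) 1%:M 0 (gather_fnn R d n)
  (fun _ => copy_WO R n (d * n) (2 * d * n))
  (fun _ => copy_WV R (d * n) (2 * d * n) (d * n)) (fun _ => 0) (fun _ => 0)
  (fnn_pad R N (d * n) W 1 L)).
split; [split|split].
- exact: fnn_bounded_le le_1B (gather_fnn_bounded _ _ _ n0).
- apply: fnn_pad_bounded; first exact: le_trans ler01 le_1B.
  exact: fnn_bounded_le le_BB bN.
- by move=> h; split; [|split; [|split]] => i j /=;
    rewrite ?copy_WO_norm ?copy_WV_norm ?mxE ?normr0.
move=> X X01; apply/matrixP => i c.
rewrite ord1 /tf1_eval /= mul1mx addr0 mxE [RHS]mxE.
apply: fnn_eval_pad => // [||j lt_j]; first lia; first exact: leq_maxl.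
exact: attn_gather_flatten.
Qed.
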